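(* Let $n\ge 1$, $p\ge 0$ be integers and let $S\subseteq\mathbb{R}^n\times\mathbb{R}^p$ be permutation-invariant with respect to $x$. Let $S_0=S\cap\{(u,z)\in\mathbb{R}^n\times\mathbb{R}^p\mid u_1\ge u_2\ge\dots\ge u_n\}$. Then $$\mathrm{conv}(S)=\{(x,z)\in\mathbb{R}^n\times\mathbb{R}^p\mid \exists u\in\mathbb{R}^n \text{ such that } (u,z)\in\mathrm{conv}(S_0) \text{ and } u\ge_m x\}.$$
   Context: A set $S\subseteq\mathbb{R}^n\times\mathbb{R}^p$ is permutation-invariant with respect to $x$ if $(x,z)\in S$ implies $(Px,z)\in S$ for every $n\times n$ permutation matrix $P$. For $x\in\mathbb{R}^n$, $x_{[i]}$ denotes the $i$-th largest component of $x$. For $x,y\in\mathbb{R}^n$, $x\ge_m y$ ($x$ majorizes $y$) means $\sum_{i=1}^j x_{[i]}\ge\sum_{i=1}^j y_{[i]}$ for $j=1,\dots,n-1$ and $\sum_{i=1}^n x_{[i]}=\sum_{i=1}^n y_{[i]}$. $\mathrm{conv}$ denotes convex hull. *)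

(* Real numbers are an arbitrary realFieldType R (the
   statement is purely order-algebraic; R = the reals is an instance). *)
From HB Require Import structures.
From mathcomp Require Import all_boot all_order all_fingroup all_algebra.
Set Implicit Arguments. Unset Strict Implicit. Unset Printing Implicit Defensive.
Import Order.TTheory GRing.Theory Num.Theory.
Local Open Scope ring_scope.

Definition pt (R : realFieldType) (n p : nat) := ('rV[R]_n * 'rV[R]_p)%type.

Definition conv (R : realFieldType) (n p : nat) (A : pt R n p -> Prop)
  (v : pt R n p) : Prop :=
  exists (m : nat) (lam : 'I_m -> R) (pts : 'I_m -> pt R n p),
    [/\ forall i, 0 <= lam i,
        \sum_(i < m) lam i = 1,
        forall i, A (pts i),
        v.1 = \sum_(i < m) lam i *: (pts i).1 &
        v.2 = \sum_(i < m) lam i *: (pts i).2].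

(* P x for the permutation matrix of s: (P x)_i = x_{s i}. *)
Definition permute (R : realFieldType) (n : nat) (s : 'S_n) (x : 'rV[R]_n)
  : 'rV[R]_n := col_perm s x.

Definition perm_invariant (R : realFieldType) (n p : nat)
  (S : pt R n p -> Prop) : Prop :=
  forall (x : 'rV[R]_n) (z : 'rV[R]_p) (s : 'S_n), S (x, z) -> S (permute s x, z).

Definition nonincreasing (R : realFieldType) (n : nat) (u : 'rV[R]_n) : Prop :=
  forall i j : 'I_n, (i <= j)%N -> u ord0 j <= u ord0 i.

(* The components of x sorted in nonincreasing order: (dsort x)`_i = x_[i+1]. *)
Definition dsort (R : realFieldType) (n : nat) (x : 'rV[R]_n) : seq R :=
  sort (fun a b : R => b <= a) [seq x ord0 i | i <- enum 'I_n].

Definition majorizes (R : realFieldType) (n : nat) (x y : 'rV[R]_n) : Prop :=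
  (forall j : nat, (1 <= j <= n.-1)%N ->
     \sum_(i < j) (dsort y)`_i <= \sum_(i < j) (dsort x)`_i) /\
  \sum_(i < n) (dsort x)`_i = \sum_(i < n) (dsort y)`_i.

From HB Require Import structures.
From mathcomp Require Import all_boot all_order all_fingroup all_algebra.
From mathcomp Require Import ring lra.
Import Order.TTheory GRing.Theory Num.Theory.
Set Implicit Arguments. Unset Strict Implicit.
Local Open Scope ring_scope.

(* Sorting each point of a convex combination of points of S (allowed by
   permutation invariance) gives a point u of conv S0; since a sorted vector
   has the largest prefix sums among all its rearrangements, u majorizes x.
   Conversely, by Rado's theorem a vector majorized by u is a convex
   combination of rearrangements of u.  This is proved by induction on the
   number of coordinates where the sorted vectors differ: moving mass from the
   first coordinate where u is too large to the first later one where it is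
   too small is a T-transform (1 - c) a + c (a o tau), tau a transposition,
   which keeps the majorization and repairs one more coordinate.  Permutation
   invariance of S then puts the resulting combination in conv S. *)


Section PermMixture.
Variables (R : realFieldType) (T : finType).
Implicit Types a b : T -> R.

Definition perm_mixture a b : Prop :=
  exists mu : {perm T} -> R, [/\ forall s, 0 <= mu s, \sum_s mu s = 1 &
     forall i, b i = \sum_s mu s * a (s i)].

Lemma perm_mixture_eq a b : a =1 b -> perm_mixture a b.
Proof.
move=> ab.
exists (fun s => (s == 1%g)%:R); split=> [s||i]; first by rewrite ler0n.
  by rewrite (bigD1 1%g) //= eqxx big1 ?addr0 // => s /negbTE ->.
rewrite -ab (bigD1 1%g) //= eqxx mul1r perm1 big1 ?addr0 // => s /negbTE ->.
by rewrite mul0r.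
Qed.

Lemma perm_mixture_Ttransform a a' b (c : R) (t : {perm T}) :
  0 <= c <= 1 -> (forall i, a' i = (1 - c) * a i + c * a (t i)) ->
  perm_mixture a' b -> perm_mixture a b.
Proof.
case/andP=> c_ge0 c_le1 ha' [mu [mu_ge0 mu_sum1 hb]].
have shift (F : {perm T} -> R) : \sum_s F (s * t^-1)%g = \sum_s F s.
  by rewrite (reindex_inj (mulIg t)) /=; apply: eq_bigr => s _; rewrite mulgK.
exists (fun s => (1 - c) * mu s + c * mu (s * t^-1)%g); split=> [s||i].
- by rewrite addr_ge0 ?mulr_ge0 ?subr_ge0.
- by rewrite big_split -!mulr_sumr (shift mu) mu_sum1 /=; ring.
transitivity (\sum_s ((1 - c) * mu s * a (s i) + c * mu s * a (t (s i)))).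
  by rewrite hb; apply: eq_bigr => s _; rewrite ha'; ring.
rewrite big_split /=.
rewrite -[\sum_s c * mu s * a (t (s i))](shift (fun s => c * mu s * a (t (s i)))).
rewrite -big_split /=; apply: eq_bigr => s _; rewrite permM permKV; ring.
Qed.

End PermMixture.

Section PrefixMajorization.
Variables (R : realFieldType) (n : nat).
Implicit Types (a b : 'I_n -> R) (k l : 'I_n).

Definition prefix_majorized b a : Prop :=
  (forall j, \sum_(i < n | (i < j)%N) b i <= \sum_(i < n | (i < j)%N) a i) /\
  \sum_i b i = \sum_i a i.

Lemma sum_prefix_full (F : 'I_n -> R) j :
  (n <= j)%N -> \sum_(i < n | (i < j)%N) F i = \sum_i F i.
Proof. by move=> nj; apply: eq_bigl => i; rewrite (leq_trans (ltn_ord i) nj). Qed.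

Definition transfer a k l (d : R) (i : 'I_n) : R :=
  a i - d * (i == k)%:R + d * (i == l)%:R.

Lemma sum_indicator (P : pred 'I_n) (d : R) k :
  \sum_(i | P i) d * (i == k)%:R = d * (P k)%:R.
Proof.
rewrite big_mkcond (bigD1 k) //= eqxx big1 ?addr0.
  by case: (P k); rewrite ?mulr1 ?mulr0.
by move=> i /negbTE ->; rewrite mulr0 if_same.
Qed.

Lemma sum_transfer (P : pred 'I_n) a k l d :
  \sum_(i | P i) transfer a k l d i =
  \sum_(i | P i) a i - d * (P k)%:R + d * (P l)%:R.
Proof. by rewrite /transfer big_split sumrB /= !sum_indicator. Qed.

Lemma transfer_tperm a k l d i : a k != a l ->
  transfer a k l d i =
  (1 - d / (a k - a l)) * a i + d / (a k - a l) * a (tperm k l i).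
Proof.
move=> akl; have kl : k != l by apply: contraNneq akl => ->.
have akl0 : a k - a l != 0 by rewrite subr_eq0.
rewrite /transfer; case: (tpermP k l i) => [->|->|/eqP ik /eqP il].
- by rewrite eqxx (negbTE kl) mulr1 mulr0 addr0; field.
- by rewrite eqxx eq_sym (negbTE kl) mulr1 mulr0 subr0; field.
- by rewrite (negbTE ik) (negbTE il) !mulr0 subr0 addr0; ring.
Qed.

Lemma first_gap_sum a b k : (forall i : 'I_n, (i < k)%N -> a i = b i) ->
  \sum_(i < n | (i < k.+1)%N) (a i - b i) = a k - b k.
Proof.
move=> agree; rewrite (bigD1 k) //= big1 ?addr0 // => i /andP[ik1 ik].
by rewrite agree ?subrr // ltn_neqAle ik -ltnS.
Qed.

Lemma first_gap_le_sum a b k j : (k < j)%N ->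
  (forall i : 'I_n, (i < k)%N -> a i = b i) ->
  (forall i : 'I_n, (k < i)%N -> (i < j)%N -> b i <= a i) ->
  a k - b k <= \sum_(i < n | (i < j)%N) (a i - b i).
Proof.
move=> kj agree above; rewrite (bigD1 k) //= lerDl.
apply: sumr_ge0 => i /andP[ij ik]; case: (ltngtP i k) => [ilt|igt|/val_inj ieq].
- by rewrite agree ?subrr.
- by rewrite subr_ge0 above.
- by rewrite ieq eqxx in ik.
Qed.

Lemma majorized_first_gap a b k : prefix_majorized b a ->
  (forall i : 'I_n, (i < k)%N -> a i = b i) -> b k <= a k.
Proof.
by move=> [pre _] agree; rewrite -subr_ge0 -(first_gap_sum agree) sumrB subr_ge0.
Qed.

Lemma majorized_deficit a b k : prefix_majorized b a ->
  (forall i : 'I_n, (i < k)%N -> a i = b i) -> b k < a k ->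
  exists l, [/\ (k < l)%N, a l < b l &
                forall i : 'I_n, (k < i)%N -> (i < l)%N -> b i <= a i].
Proof.
move=> [_ tot] agree bk_lt.
case: (pickP (fun i : 'I_n => (k < i)%N && (a i < b i))) => [l0 hl0|none].
  have [l /andP[kl al] lmin] :=
    @arg_minnP _ l0 (fun i : 'I_n => (k < i)%N && (a i < b i)) val hl0.
  exists l; split=> // i ki il; rewrite leNgt; apply/negP => ai.
  by have := lmin i; rewrite ki ai => /(_ isT); rewrite leqNgt il.
have below (i : 'I_n) : (k < i)%N -> (i < n)%N -> b i <= a i.
  by move=> ki _; move: (none i); rewrite ki /= => /negbT; rewrite -leNgt.
have := first_gap_le_sum (ltn_ord k) agree below.
by rewrite sum_prefix_full // sumrB tot subrr subr_le0 leNgt bk_lt.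
Qed.

Lemma majorized_transfer a b k l d : prefix_majorized b a -> (k < l)%N ->
  (forall i : 'I_n, (i < k)%N -> a i = b i) ->
  (forall i : 'I_n, (k < i)%N -> (i < l)%N -> b i <= a i) ->
  d <= a k - b k -> prefix_majorized b (transfer a k l d).
Proof.
move=> [pre tot] kl agree between dk; split; last first.
  by rewrite (sum_transfer xpredT) /= tot mulr1 subrK.
move=> j; rewrite (sum_transfer (fun i : 'I_n => (i < j)%N)) /=.
case kj: (k < j)%N; case lj: (l < j)%N => /=.
- by rewrite !mulr1 subrK.
- have lj' : (j <= l)%N by rewrite leqNgt lj.
  have := first_gap_le_sum kj agree (fun i ki ij => between i ki (leq_trans ij lj')).
  rewrite sumrB mulr1 mulr0 addr0 => h; lra.
- by rewrite (ltn_trans kl lj) in kj.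
- by rewrite !mulr0 subr0 addr0.
Qed.

Lemma card_transfer_lt a b k l d : a k != b k -> a l != b l ->
  (transfer a k l d k == b k) || (transfer a k l d l == b l) ->
  (#|[set i | transfer a k l d i != b i]| < #|[set i | a i != b i]|)%N.
Proof.
move=> ak al fixed; apply: proper_card; apply/properP; split.
  apply/subsetP => i; rewrite !inE; case: (eqVneq i k) => [-> //|ik].
  case: (eqVneq i l) => [-> //|il].
  by rewrite /transfer (negbTE ik) (negbTE il) !mulr0 subr0 addr0.
by case/orP: fixed => [fk|fl]; [exists k | exists l]; rewrite !inE ?fk ?fl.
Qed.

Lemma majorized_step a b :
  (forall i j : 'I_n, (i <= j)%N -> b j <= b i) -> prefix_majorized b a ->
  forall i0, a i0 != b i0 ->
  exists a' (c : R) (t : 'S_n), [/\ 0 <= c <= 1,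
    forall i, a' i = (1 - c) * a i + c * a (t i),
    prefix_majorized b a' &
    (#|[set i | a' i != b i]| < #|[set i | a i != b i]|)%N].
Proof.
move=> b_noninc maj i0 ai0.
have [k /= ak kmin] := @arg_minnP _ i0 (fun i => a i != b i) val ai0.
have agree (i : 'I_n) : (i < k)%N -> a i = b i.
  by move=> ik; apply/eqP; apply: contraTT ik => /kmin; rewrite -leqNgt.
have bk_lt : b k < a k by rewrite lt_neqAle eq_sym ak majorized_first_gap.
have [l [kl al between]] := majorized_deficit maj agree bk_lt.
have bl_le : b l <= b k by apply/b_noninc/ltnW.
pose d := Num.min (a k - b k) (b l - a l).
have d_gt0 : 0 < d by rewrite lt_min !subr_gt0 bk_lt al.
have dk : d <= a k - b k by rewrite ge_min lexx.
have dl : d <= b l - a l by rewrite ge_min lexx orbT.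
have d_akl : d <= a k - a l by lra.
exists (transfer a k l d), (d / (a k - a l)), (tperm k l); split.
- by rewrite divr_ge0 ?ler_pdivrMr ?mul1r //=; lra.
- by move=> i; apply: transfer_tperm; rewrite -subr_eq0; lra.
- exact: majorized_transfer.
apply: card_transfer_lt; [by rewrite gt_eqF | by rewrite lt_eqF |].
have kl_neq : k != l by rewrite neq_ltn kl.
rewrite /transfer !eqxx (negbTE kl_neq) [l == k]eq_sym (negbTE kl_neq).
rewrite !mulr1 !mulr0 addr0 subr0 /d.
by case: leP => _; [rewrite subKr eqxx | rewrite orbC addrC subrK eqxx].
Qed.

Lemma majorized_perm_mixture a b :
  (forall i j : 'I_n, (i <= j)%N -> b j <= b i) -> prefix_majorized b a ->
  perm_mixture a b.
Proof.
move=> b_noninc; move: {2}#|_| (leqnn #|[set i | a i != b i]|) => N.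
elim: N a => [|N IH] a card_le maj.
  apply: perm_mixture_eq => i; apply/eqP; apply: contraTT card_le => ai.
  by rewrite -ltnNge (cardD1 i) inE ai.
case: (pickP (fun i => a i != b i)) => [i0 ai0|same].
  have [a' [c [t [c01 a'E maj' card_lt]]]] := majorized_step b_noninc maj ai0.
  apply: (perm_mixture_Ttransform c01 a'E); apply: IH maj'.
  by rewrite -ltnS (leq_trans card_lt).
by apply: perm_mixture_eq => i; apply/eqP; move/negbT: (same i); rewrite negbK.
Qed.

End PrefixMajorization.

Section SortedComponents.
Variables (R : realFieldType) (n : nat).
Implicit Types x u : 'rV[R]_n.

Lemma dsort_perm x : exists s : 'S_n, forall i : 'I_n, (dsort x)`_i = x ord0 (s i).
Proof.
have : perm_eq (dsort x) [tuple x ord0 i | i < n].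
  by rewrite /dsort perm_sort /= /mktuple -map_comp.
case/tuple_permP => s sE; exists s => i.
by rewrite sE /= (nth_map i) ?size_enum_ord // nth_ord_enum tnth_map tnth_ord_tuple.
Qed.

Lemma size_dsort x : size (dsort x) = n.
Proof. by rewrite /dsort size_sort size_map size_enum_ord. Qed.

Lemma dsort_noninc x (i j : 'I_n) : (i <= j)%N -> (dsort x)`_j <= (dsort x)`_i.
Proof.
have sorted_x : sorted (fun a b : R => b <= a) (dsort x).
  by apply: sort_sorted => a b; exact: le_total.
have trans : transitive (fun a b : R => b <= a).
  by move=> a b c ba cb; exact: le_trans cb ba.
by move=> ij; apply: (sorted_leq_nth trans lexx 0 sorted_x) => //; rewrite inE size_dsort.
Qed.

Lemma sum_dsort x : \sum_(i < n) (dsort x)`_i = \sum_i x ord0 i.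
Proof.
have [s sE] := dsort_perm x; under eq_bigr do rewrite sE.
by rewrite [RHS](reindex_inj (@perm_inj _ s)).
Qed.

Lemma prefix_sum_perm_le (d : 'I_n -> R) (s : 'S_n) j :
  (forall i k : 'I_n, (i <= k)%N -> d k <= d i) ->
  \sum_(i < n | (i < j)%N) d (s i) <= \sum_(i < n | (i < j)%N) d i.
Proof.
move=> d_noninc; have [jn|nj] := ltnP j n; last first.
  rewrite !sum_prefix_full //.
  by rewrite [X in _ <= X](reindex_inj (@perm_inj _ s)).
pose t := d (Ordinal jn).
have shift (P : pred 'I_n) :
    \sum_(i | P i) d i = \sum_(i | P i) (d i - t) + \sum_(i | P i) t.
  by rewrite -big_split /=; apply: eq_bigr => i _; rewrite subrK.
rewrite (reindex_inj (@perm_inj _ s^-1)) /=.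
under eq_bigr do rewrite permKV.
rewrite shift [X in _ <= X]shift.
have -> : \sum_(i | ((s^-1)%g i < j)%N) t = \sum_(i < n | (i < j)%N) t.
  by rewrite (reindex_inj (@perm_inj _ s)) /=; apply: eq_bigl => i; rewrite permK.
(* After subtracting t = d j, the terms indexed below j are nonnegative and
   the others nonpositive. *)
rewrite lerD2r big_mkcond [X in _ <= X]big_mkcond /=.
apply: ler_sum => i _; case: ifP => si; case: ifP => ij //.
- by rewrite subr_le0 d_noninc // leqNgt ij.
- by rewrite subr_ge0 d_noninc // ltnW.
Qed.

Lemma prefix_sum_le_dsort x (s : 'S_n) j :
  \sum_(i < n | (i < j)%N) x ord0 (s i) <= \sum_(i < n | (i < j)%N) (dsort x)`_i.
Proof.
have [sx sxE] := dsort_perm x.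
under eq_bigr do rewrite -[s _](permKV sx) -sxE -permM.
by apply: prefix_sum_perm_le => i k; apply: dsort_noninc.
Qed.

Lemma majorizesE u x : majorizes u x <->
  prefix_majorized (fun i : 'I_n => (dsort x)`_i) (fun i : 'I_n => (dsort u)`_i).
Proof.
have widen (y : 'rV[R]_n) j : (j <= n)%N ->
    \sum_(i < j) (dsort y)`_i = \sum_(i < n | (i < j)%N) (dsort y)`_i.
  by move=> jn; rewrite (big_ord_widen n (fun i => (dsort y)`_i) jn).
split=> [[pre tot]|[pre tot]]; split; try by rewrite tot.
  move=> j; have [->|j0] := posnP j; first by rewrite !big_pred0.
  have [jn|nj] := ltnP j n; last by rewrite !sum_prefix_full // tot.
  rewrite -!widen ?(ltnW jn) //; apply: pre.
  by rewrite j0 -ltnS prednK // (leq_trans j0 (ltnW jn)).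
move=> j /andP[_ jn]; have jn' := leq_trans jn (leq_pred n).
by rewrite !widen //; apply: pre.
Qed.

End SortedComponents.

Section ConvexHull.
Variables (R : realFieldType) (n p : nat).
Implicit Types (S A B : pt R n p -> Prop) (x u : 'rV[R]_n) (z : 'rV[R]_p).

Lemma sub_conv A B v : (forall w, A w -> B w) -> conv A v -> conv B v.
Proof.
move=> AB [m [lam [pts [lam_ge0 lam_sum1 Apts v1 v2]]]].
by exists m, lam, pts; split=> // i; apply: AB.
Qed.

Lemma conv_fin (T : finType) A v (lam : T -> R) (pts : T -> pt R n p) :
  (forall t, 0 <= lam t) -> \sum_t lam t = 1 -> (forall t, A (pts t)) ->
  v.1 = \sum_t lam t *: (pts t).1 -> v.2 = \sum_t lam t *: (pts t).2 -> conv A v.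
Proof.
move=> lam_ge0 lam_sum1 Apts v1 v2.
have reindex (V : nmodType) (F : T -> V) :
    \sum_t F t = \sum_(i < #|T|) F (enum_val i).
  by rewrite -big_enum_val; apply: eq_bigl => t; rewrite inE.
exists #|T|, (fun i => lam (enum_val i)), (fun i => pts (enum_val i)); split=> //.
- by rewrite -lam_sum1 (reindex _ lam).
- by rewrite v1 (reindex _ (fun t => lam t *: (pts t).1)).
- by rewrite v2 (reindex _ (fun t => lam t *: (pts t).2)).
Qed.

Lemma sum_comb_entries (I : finType) (P : pred 'I_n) (f : 'I_n -> 'I_n)
    (lam : I -> R) (w : I -> 'rV[R]_n) :
  \sum_(k | P k) (\sum_i lam i *: w i) ord0 (f k) =
  \sum_i lam i * \sum_(k | P k) w i ord0 (f k).
Proof.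
under eq_bigr do rewrite summxE; rewrite exchange_big /=.
by apply: eq_bigr => i _; rewrite mulr_sumr; apply: eq_bigr => k _; rewrite mxE.
Qed.

Lemma conv_sorted_majorant S x z : perm_invariant S -> conv S (x, z) ->
  exists u, conv (fun v => S v /\ nonincreasing v.1) (u, z) /\ majorizes u x.
Proof.
move=> S_inv [m [lam [pts [lam_ge0 lam_sum1 Spts /= xE zE]]]].
pose y i := (pts i).1.
pose ys i : 'rV[R]_n := \row_k (dsort (y i))`_k.
have S_ys i : S (ys i, (pts i).2).
  have [s sE] := dsort_perm (y i).
  have -> : ys i = permute s (y i) by apply/rowP => k; rewrite !mxE sE.
  by apply: S_inv; rewrite /y -surjective_pairing.
pose u := \sum_i lam i *: ys i.
have lam_prefix_le j (s : 'S_n) :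
    \sum_i lam i * \sum_(k < n | (k < j)%N) y i ord0 (s k) <=
    \sum_(k < n | (k < j)%N) u ord0 k.
  rewrite /u (sum_comb_entries _ id).
  apply: ler_sum => i _; apply: ler_wpM2l => //.
  under [X in _ <= X]eq_bigr do rewrite mxE.
  exact: prefix_sum_le_dsort.
exists u; split.
  exists m, lam, (fun i => (ys i, (pts i).2)); split=> // i; split=> // a b ab.
  by rewrite !mxE; exact: dsort_noninc.
apply/(majorizesE u x); split=> [j|].
  have [sx sxE] := dsort_perm x.
  under eq_bigr do rewrite sxE.
  rewrite xE (sum_comb_entries _ sx); apply: (le_trans (lam_prefix_le j sx)).
  by under eq_bigr do rewrite -[k in u _ k]perm1; apply: prefix_sum_le_dsort.
rewrite !sum_dsort xE /u !(sum_comb_entries xpredT id).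
by apply: eq_bigr => i _; under [in RHS]eq_bigr do rewrite mxE; rewrite sum_dsort.
Qed.

Lemma majorizes_perm_comb u x : majorizes u x ->
  exists mu : 'S_n -> R,
    [/\ forall s, 0 <= mu s, \sum_s mu s = 1 & x = \sum_s mu s *: permute s u].
Proof.
move=> /majorizesE maj.
have [mu [mu_ge0 mu_sum1 mixE]] := majorized_perm_mixture (@dsort_noninc _ _ x) maj.
have [sx sxE] := dsort_perm x; have [su suE] := dsort_perm u.
have rho_inj : injective (fun r : 'S_n => sx^-1 * r * su)%g.
  by move=> r1 r2 /mulIg /mulgI.
have muE r : mu (sx * (sx^-1 * r * su) * su^-1)%g = mu r.
  by rewrite !mulgA mulgV mul1g mulgK.
exists (fun s => mu (sx * s * su^-1)%g); split=> //.
  by rewrite (reindex_inj rho_inj) /=; under eq_bigr do rewrite muE.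
apply/rowP => k; rewrite summxE (reindex_inj rho_inj) /=.
rewrite -[k in LHS](permKV sx) -sxE mixE; apply: eq_bigr => r _.
by rewrite muE !mxE suE !permM.
Qed.

Lemma conv_perm_comb S u z (mu : 'S_n -> R) : perm_invariant S ->
  conv S (u, z) -> (forall s, 0 <= mu s) -> \sum_s mu s = 1 ->
  conv S (\sum_s mu s *: permute s u, z).
Proof.
move=> S_inv [m [lam [pts [lam_ge0 lam_sum1 Spts /= uE zE]]]] mu_ge0 mu_sum1.
pose w (q : 'S_n * 'I_m) := mu q.1 * lam q.2.
apply: (conv_fin (lam := w) (pts := fun q => (permute q.1 (pts q.2).1, (pts q.2).2))).
- by move=> q; rewrite mulr_ge0.
- rewrite -(pair_bigA _ (fun s i => w (s, i))) /w /=.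
  by under eq_bigr do rewrite -mulr_sumr lam_sum1 mulr1.
- by move=> [s i] /=; apply: S_inv; rewrite -surjective_pairing.
- apply/rowP => k; rewrite !summxE.
  rewrite -(pair_bigA _ (fun s i => (w (s, i) *: permute s (pts i).1) ord0 k)) /w /=.
  apply: eq_bigr => s _; rewrite !mxE uE summxE mulr_sumr; apply: eq_bigr => i _.
  by rewrite !mxE mulrA.
- rewrite -(pair_bigA _ (fun s i => w (s, i) *: (pts i).2)) /w /= zE.
  rewrite [RHS]exchange_big; apply: eq_bigr => i _.
  by rewrite -scaler_suml -mulr_suml mu_sum1 mul1r.
Qed.

End ConvexHull.

Theorem theorem1 (R : realFieldType) (n p : nat) (hn : (1 <= n)%N)
  (S : pt R n p -> Prop) (hS : perm_invariant S) :
  let S0 := fun v : pt R n p => S v /\ nonincreasing v.1 in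
  forall (x : 'rV[R]_n) (z : 'rV[R]_p),
    conv S (x, z) <-> exists u : 'rV[R]_n, conv S0 (u, z) /\ majorizes u x.
Proof.
move=> S0 x z; split; first exact: conv_sorted_majorant.
case=> u [conv_u /majorizes_perm_comb [mu [mu_ge0 mu_sum1 ->]]].
by apply: conv_perm_comb => //; apply: sub_conv conv_u => v [].
Qed.
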